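(* Under the standing assumptions in the context, there exist a neighborhood $\mathcal U$ of $(0,\bar X)$ and $C>0$ such that for every $(t,X)\in\mathcal U\cap\{t>0\}$, \[ |\partial_t\lambda_1|\le C a,\qquad |\partial_t\lambda_2|\le C,\qquad |\partial_t\lambda_3|\le C . \]
   Context: Let $W\subset\mathbb R^l$ be open, $\bar X\in W$, $c,T>0$, and let $a(t,X),b(t,X)$ be real-valued $C^\infty$ functions on $(-c,T)\times W$ with bounded derivatives of all orders. Assume $\Delta(t,X):=4a(t,X)^3-27b(t,X)^2\ge 0$ on $[0,T)\times W$, $a(0,\bar X)=0$, and $a(t,X)>0$ on $(0,T)\times W$. Let $S(t,X)=\begin{bmatrix}3&0&-a\\0&2a&3b\\-a&3b&a^2\end{bmatrix}$ and let $0\le\lambda_1\le\lambda_2\le\lambda_3$ be its eigenvalues (smooth on $\mathcal U\cap\{t>0\}$ for a small neighborhood $\mathcal U$ of $(0,\bar X)$). *)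

From HB Require Import structures.
From mathcomp Require Import all_boot all_order all_algebra.
From mathcomp Require Import all_classical all_reals all_analysis.
Set Implicit Arguments. Unset Strict Implicit. Unset Printing Implicit Defensive.
Import Order.TTheory GRing.Theory Num.Theory.
Import numFieldNormedType.Exports.
Local Open Scope classical_set_scope.
Local Open Scope ring_scope.

Section Defs.
Variables (R : realType) (l : nat).

(* A direction of partial differentiation: None = d/dt, Some j = d/dX_j. *)
Definition pderiv (F : R -> 'rV[R]_l -> R) (d : option 'I_l) : R -> 'rV[R]_l -> R :=
  match d with
  | None => fun t X => 'D_1 (fun s : R => F s X) t
  | Some j => fun t X => 'D_(delta_mx 0 j) (F t) X
  end.

Definition pderivable (F : R -> 'rV[R]_l -> R) (d : option 'I_l) (t : R) (X : 'rV[R]_l) : Prop :=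
  match d with
  | None => derivable (fun s : R => F s X) t 1
  | Some j => derivable (F t) X (delta_mx 0 j)
  end.

Definition iter_pderiv (ds : seq (option 'I_l)) (F : R -> 'rV[R]_l -> R) :=
  foldr (fun d G => pderiv G d) F ds.

(* F is C^infty on (-c,T) x W with bounded derivatives of all orders:
   all iterated partial derivatives exist on the domain, and those of
   order >= 1 are bounded there. *)
Definition smooth_bdd_derivs (c T : R) (W : set 'rV[R]_l) (F : R -> 'rV[R]_l -> R) : Prop :=
  (forall (ds : seq (option 'I_l)) (d : option 'I_l) (t : R) (X : 'rV[R]_l),
      - c < t < T -> W X -> pderivable (iter_pderiv ds F) d t X) /\
  (forall ds : seq (option 'I_l), ds != [::] ->
      exists M : R, forall (t : R) (X : 'rV[R]_l),
        - c < t < T -> W X -> `|iter_pderiv ds F t X| <= M).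

End Defs.

Definition Smat (R : realType) (a b : R) : 'M[R]_3 :=
  \matrix_(i < 3, j < 3)
    nth 0 (nth [::] [:: [:: 3; 0; - a]; [:: 0; 2 * a; 3 * b]; [:: - a; 3 * b; a ^+ 2]] i) j.

Definition sorted_eigenvalues (R : realType) (A : 'M[R]_3) (l1 l2 l3 : R) : Prop :=
  l1 <= l2 <= l3 /\
  char_poly A = ('X - l1%:P) * ('X - l2%:P) * ('X - l3%:P).

(* For 0 < a <= 1/100 and 4a^3 >= 27b^2, the characteristic polynomial
   E(x) = det (x - S) changes sign at a/2, 3a, 2 and 4; together with
   l1 l2 l3 = 4a^3 - 27b^2 >= 0 this confines the eigenvalues to
   0 <= l1 <= 4a^2, a/2 < l2 < 3a and 2 < l3 < 4.  They are thus simple, and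
   differentiating E(t, li(t)) = 0 gives
     li' * prod_{j <> i} (li - lj) = - d_t E(li) = - (a' d_a E(li) + b b' (54 - 18 li)).
   The gaps are of order a for l1, l2 and of order 1 for l3, d_a E(li) is
   O(a^2), O(a), O(1), and b b' = O(a^2): b^2 <= a^3, and since the
   discriminant is still nonnegative at time t + a(t), a Taylor expansion of b
   over [t, t + a(t)] gives |b'| a = O(a^(3/2)).  Finally a is small near
   (0, Xbar) because a(0, Xbar) = 0 and its first derivatives are bounded. *)

From HB Require Import structures.
From mathcomp Require Import all_boot all_order all_algebra.
From mathcomp Require Import all_classical all_reals all_analysis.
From mathcomp Require Import ring lra.
Import Order.TTheory GRing.Theory Num.Theory.
Import numFieldNormedType.Exports.
Local Open Scope classical_set_scope.
Local Open Scope ring_scope.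
Set Implicit Arguments. Unset Strict Implicit. Unset Printing Implicit Defensive.

Section CharacteristicPolynomial.
Variable R : realFieldType.
Implicit Types a b x : R.

Definition charS a b x : R :=
  x ^+ 3 - (3 + 2 * a + a ^+ 2) * x ^+ 2
  + (6 * a + 2 * a ^+ 2 + 2 * a ^+ 3 - 9 * b ^+ 2) * x - (4 * a ^+ 3 - 27 * b ^+ 2).

Definition charS_slope (a1 a0 x : R) : R :=
  - (2 + (a1 + a0)) * x ^+ 2 + (6 + 2 * (a1 + a0) + 2 * (a1 * a1 + a1 * a0 + a0 * a0)) * x
  - 4 * (a1 * a1 + a1 * a0 + a0 * a0).

Lemma charS_sub (a1 b1 a0 b0 x : R) :
  charS a1 b1 x - charS a0 b0 x =
  (a1 - a0) * charS_slope a1 a0 x + (b1 - b0) * ((b1 + b0) * (27 - 9 * x)).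
Proof. by rewrite /charS /charS_slope; ring. Qed.

Lemma charS_slopeE (a1 a0 x : R) : charS_slope a1 a0 x =
  (- (2 + a0) * x ^+ 2 + (6 + 2 * a0 + 2 * a0 ^+ 2) * x - 4 * a0 ^+ 2)
  + (- x ^+ 2 + 2 * x + 2 * a0 * x - 4 * a0) * a1 + (2 * x - 4) * (a1 * a1).
Proof. by rewrite /charS_slope; ring. Qed.

Lemma charS_signs a b : 0 < a -> a <= 1/100 -> 0 <= 4 * a ^+ 3 - 27 * b ^+ 2 ->
  [/\ 0 < charS a b (a / 2), charS a b (3 * a) < 0, charS a b 2 < 0 & 0 < charS a b 4].
Proof.
move=> a_gt0 a_small disc.
have b2_ge0 := sqr_ge0 b.
have a2_gt0 : 0 < a ^+ 2 by rewrite exprn_gt0.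
have a3_le : a ^+ 3 <= a ^+ 2 / 100 by rewrite exprS; nra.
have a3_ge0 : 0 <= a ^+ 3 by rewrite exprn_ge0 // ltW.
have a4_ge0 : 0 <= a ^+ 4 by rewrite exprn_ge0 // ltW.
rewrite /charS; split.
- have -> : (a / 2) ^+ 3 - (3 + 2 * a + a ^+ 2) * (a / 2) ^+ 2 +
     (6 * a + 2 * a ^+ 2 + 2 * a ^+ 3 - 9 * b ^+ 2) * (a / 2) - (4 * a ^+ 3 - 27 * b ^+ 2)
     = a ^+ 2 * (9/4 - 27/8 * a + 3/4 * a ^+ 2) + b ^+ 2 * (27 - 9/2 * a) by field.
  have := mulr_gt0 a2_gt0 (_ : 0 < 9/4 - 27/8 * a + 3/4 * a ^+ 2); nra.
- have -> : (3 * a) ^+ 3 - (3 + 2 * a + a ^+ 2) * (3 * a) ^+ 2 +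
     (6 * a + 2 * a ^+ 2 + 2 * a ^+ 3 - 9 * b ^+ 2) * (3 * a) - (4 * a ^+ 3 - 27 * b ^+ 2)
     = - 9 * a ^+ 2 + 11 * a ^+ 3 - 3 * a ^+ 4 + 27 * b ^+ 2 * (1 - a) by ring.
  nra.
- have -> : 2 ^+ 3 - (3 + 2 * a + a ^+ 2) * 2 ^+ 2 +
     (6 * a + 2 * a ^+ 2 + 2 * a ^+ 3 - 9 * b ^+ 2) * 2 - (4 * a ^+ 3 - 27 * b ^+ 2)
     = - 4 + 4 * a + 9 * b ^+ 2 by ring.
  nra.
- have -> : 4 ^+ 3 - (3 + 2 * a + a ^+ 2) * 4 ^+ 2 +
     (6 * a + 2 * a ^+ 2 + 2 * a ^+ 3 - 9 * b ^+ 2) * 4 - (4 * a ^+ 3 - 27 * b ^+ 2)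
     = 16 - 8 * a - 8 * a ^+ 2 + 4 * a ^+ 3 - 9 * b ^+ 2 by ring.
  nra.
Qed.

Lemma prod3_gt0_cases (l1 l2 l3 x : R) : l1 <= l2 <= l3 ->
  0 < (x - l1) * (x - l2) * (x - l3) -> l1 < x < l2 \/ l3 < x.
Proof.
move=> /andP[l12 l23] pos.
have [x_l1|l1_x] := leP x l1.
  suff : (x - l1) * (x - l2) * (x - l3) <= 0 by rewrite leNgt pos.
  by apply: mulr_ge0_le0; [apply: mulr_le0 | ]; lra.
have [x_l2|l2_x] := ltP x l2; first by left; apply/andP.
have [x_l3|//] := leP x l3; last by right.
suff : (x - l1) * (x - l2) * (x - l3) <= 0 by rewrite leNgt pos.
by apply: mulr_ge0_le0; [apply: mulr_ge0 | ]; lra.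
Qed.

Lemma prod3_lt0_cases (l1 l2 l3 x : R) : l1 <= l2 <= l3 ->
  (x - l1) * (x - l2) * (x - l3) < 0 -> x < l1 \/ l2 < x < l3.
Proof.
move=> /andP[l12 l23] neg.
have /prod3_gt0_cases : - l3 <= - l2 <= - l1 by rewrite !lerN2 l12 l23.
move=> /(_ (- x)); rewrite !ltrN2.
have -> : (- x - - l3) * (- x - - l2) * (- x - - l1) = - ((x - l1) * (x - l2) * (x - l3)).
  by ring.
by rewrite oppr_gt0 => /(_ neg) [/andP[? ?]|?]; [right; apply/andP | left].
Qed.

Definition charS_windows (a l1 l2 l3 : R) : Prop :=
  [/\ 0 <= l1 <= 4 * a ^+ 2, a / 2 < l2 < 3 * a & 2 < l3 < 4].

Lemma charS_root_bounds a b l1 l2 l3 : 0 < a -> a <= 1/100 ->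
  0 <= 4 * a ^+ 3 - 27 * b ^+ 2 -> l1 <= l2 <= l3 ->
  (forall x, charS a b x = (x - l1) * (x - l2) * (x - l3)) ->
  charS_windows a l1 l2 l3.
Proof.
move=> a_gt0 a_small disc l123 charE.
have [] := charS_signs a_gt0 a_small disc; rewrite !charE.
move=> /(prod3_gt0_cases l123) s1 /(prod3_lt0_cases l123) s2.
move=> /(prod3_lt0_cases l123) s3 /(prod3_gt0_cases l123) s4.
move: l123 => /andP[l12 l23].
have l2_mid : a / 2 < l2 < 3 * a.
  by case: s1 => [/andP[? ?]|?]; case: s2 => [?|/andP[? ?]]; apply/andP; lra.
move: (l2_mid) => /andP[l2_lo l2_hi].
have l3_mid : 2 < l3 < 4.
  by case: s3 => [?|/andP[? ?]]; case: s4 => [/andP[? ?]|?]; apply/andP; lra.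
move: (l3_mid) => /andP[l3_lo l3_hi].
have prodE : l1 * (l2 * l3) = 4 * a ^+ 3 - 27 * b ^+ 2.
  by have := charE 0; rewrite /charS; nra.
have l23_gt : a < l2 * l3 by nra.
have l1_ge0 : 0 <= l1 by nra.
split=> //; apply/andP; split=> //.
have := sqr_ge0 b; rewrite -(ler_pM2r a_gt0); nra.
Qed.

Lemma charS_windows_gaps a0 a1 l1 l2 l3 m1 m2 m3 : 0 < a0 -> a0 <= 1/100 ->
  a0 / 2 <= a1 <= 2 * a0 -> charS_windows a0 l1 l2 l3 -> charS_windows a1 m1 m2 m3 ->
  [/\ a0 / 8 <= `|(l1 - m2) * (l1 - m3)|, a0 / 8 <= `|(l2 - m1) * (l2 - m3)|
    & 1 <= `|(l3 - m1) * (l3 - m2)|].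
Proof.
move=> a0_gt0 a0_small /andP[a1_lo a1_hi].
move=> [/andP[l1_lo l1_hi] /andP[l2_lo l2_hi] /andP[l3_lo l3_hi]].
move=> [/andP[m1_lo m1_hi] /andP[m2_lo m2_hi] /andP[m3_lo m3_hi]].
have a0_sq : a0 ^+ 2 <= a0 / 100 by rewrite expr2; nra.
have a1_sq : a1 ^+ 2 <= 4 * a0 ^+ 2 by rewrite !expr2; nra.
rewrite !normrM; split.
- rewrite -[a0 / 8]mulr1 (ler0_norm (_ : l1 - m2 <= 0)) ?(ler0_norm (_ : l1 - m3 <= 0));
    try lra; apply: ler_pM; lra.
- rewrite -[a0 / 8]mulr1 (ger0_norm (_ : 0 <= l2 - m1)) ?(ler0_norm (_ : l2 - m3 <= 0));
    try lra; apply: ler_pM; lra.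
- rewrite -[1]mulr1 (ger0_norm (_ : 0 <= l3 - m1)) ?(ger0_norm (_ : 0 <= l3 - m2));
    try lra; apply: ler_pM; lra.
Qed.

Lemma charS_slope_bound a x : 0 < a -> a <= 1/100 -> 0 <= x ->
  `|charS_slope a a x| <= 3 * x ^+ 2 + 7 * x + 12 * a ^+ 2.
Proof.
move=> a_gt0 a_small x_ge0; rewrite /charS_slope ler_norml.
have := sqr_ge0 x; have := sqr_ge0 a.
have : a * a <= a / 100 by nra.
rewrite !expr2 => *; apply/andP; split; nra.
Qed.

Lemma charS_windows_slope a l1 l2 l3 : 0 < a -> a <= 1/100 -> charS_windows a l1 l2 l3 ->
  [/\ `|charS_slope a a l1| <= 41 * a ^+ 2, `|charS_slope a a l2| <= 22 * a
    & `|charS_slope a a l3| <= 77].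
Proof.
move=> a_gt0 a_small [/andP[l1_lo l1_hi] /andP[l2_lo l2_hi] /andP[l3_lo l3_hi]].
have a_sq : a * a <= a / 100 by nra.
split; (apply: le_trans (charS_slope_bound a_gt0 a_small _) _; [lra | rewrite !expr2 in l1_hi *; nra]).
Qed.

Lemma charS_windows_affine a l1 l2 l3 : 0 < a -> a <= 1/100 -> charS_windows a l1 l2 l3 ->
  [/\ `|54 - 18 * l1| <= 54, `|54 - 18 * l2| <= 54 & `|54 - 18 * l3| <= 18].
Proof.
move=> a_gt0 a_small [/andP[l1_lo l1_hi] /andP[l2_lo l2_hi] /andP[l3_lo l3_hi]].
have a_sq : a ^+ 2 <= a / 100 by rewrite expr2; nra.
by split; rewrite ler_norml; apply/andP; split; lra.
Qed.

End CharacteristicPolynomial.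

Lemma horner_char_Smat (R : realType) (a b x : R) :
  (char_poly (Smat a b)).[x] = charS a b x.
Proof.
rewrite /char_poly -[_.[x]]/(horner_eval x _) -det_map_mx.
rewrite (expand_det_row _ 0) !big_ord_recr big_ord0 /= /cofactor.
rewrite !(expand_det_row _ 0) !big_ord_recr big_ord0 /= /cofactor.
rewrite !det_mx11 !mxE /= !big_ord0 /horner_eval !hornerE /charS ?expr0 ?expr1 /=.
ring.
Qed.

Lemma sorted_eigenvalues_charS (R : realType) (a b l1 l2 l3 : R) :
  sorted_eigenvalues (Smat a b) l1 l2 l3 ->
  l1 <= l2 <= l3 /\ forall x, charS a b x = (x - l1) * (x - l2) * (x - l3).
Proof.
move=> [l123 charE]; split=> // x.
by rewrite -horner_char_Smat charE !hornerE.
Qed.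

Section Calculus.
Variable R : realType.
Implicit Types f F L D : R -> R.

Lemma derivable_shift_cvg f t :
  derivable f t 1 -> (fun h => f (h + t)) @ 0^' --> f t.
Proof. by move/derivable1_diffP/differentiable_continuous/continuous_withinNshiftx. Qed.

Lemma derive_quotE f t :
  (fun h : R => h^-1 *: ((f \o shift t) (h *: 1) - f t)) =
  (fun h => h^-1 * (f (h + t) - f t)).
Proof. by apply/funext => h /=; rewrite /GRing.scale /= mulr1. Qed.

Lemma derive_quot_cvg f t :
  derivable f t 1 -> (fun h => h^-1 * (f (h + t) - f t)) @ 0^' --> 'D_1 f t.
Proof. by rewrite /derivable /derive derive_quotE. Qed.

Lemma quot_cvg_derive f t l :
  (fun h => h^-1 * (f (h + t) - f t)) @ 0^' --> l -> derivable f t 1 /\ 'D_1 f t = l.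
Proof.
move=> fl; rewrite /derivable /derive derive_quotE; split; last exact: cvg_lim.
by apply/cvg_ex; exists l.
Qed.

Lemma implicit_continuous L F D t d : 0 < d -> derivable F t 1 ->
  (\forall h \near 0^', d <= `|D h| /\ (L (h + t) - L t) * D h = F t - F (h + t)) ->
  {for t, continuous L}.
Proof.
move=> d0 /derivable_shift_cvg dF near_eq; apply/continuous_withinNshiftx.
apply/cvgrPdist_lt => e e0.
move/cvgrPdist_lt : dF => /(_ (e * d) (mulr_gt0 e0 d0)) dF.
near=> h.
have [dD eqD] : d <= `|D h| /\ (L (h + t) - L t) * D h = F t - F (h + t) by near: h.
have dFh : `|F t - F (h + t)| < e * d by near: h.
rewrite -(ltr_pM2r d0); apply: le_lt_trans dFh.
by rewrite -eqD normrM distrC ler_wpM2l.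
Unshelve. all: by end_near.
Qed.

Lemma implicit_derivable L F D t d (l : R) : 0 < d -> derivable F t 1 ->
  D @ 0^' --> l ->
  (\forall h \near 0^', d <= `|D h| /\ (L (h + t) - L t) * D h = F t - F (h + t)) ->
  derivable L t 1 /\ 'D_1 L t * l = - 'D_1 F t.
Proof.
move=> d0 dF Dl near_eq.
have l_neq0 : l != 0.
  rewrite -normr_gt0; apply: lt_le_trans d0 _.
  have Dn : `|D h| @[h --> 0^'] --> `|l| by apply: cvg_norm.
  apply: (ler_cvg_to (cvg_cst d) Dn).
  by apply: filterS near_eq => h [].
have quot : (fun h => h^-1 * (L (h + t) - L t)) @ 0^' --> - 'D_1 F t / l.
  have quotF : (fun h => - (h^-1 * (F (h + t) - F t)) * (D h)^-1) @ 0^'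
      --> - 'D_1 F t / l.
    by apply: cvgM; [apply: cvgN; exact: derive_quot_cvg | exact: cvgV].
  apply: cvg_trans quotF.
  apply: near_eq_cvg; near=> h.
  have [dD eqD] : d <= `|D h| /\ (L (h + t) - L t) * D h = F t - F (h + t) by near: h.
  have Dh_neq0 : D h != 0 by rewrite -normr_gt0 (lt_le_trans d0).
  by rewrite /= -[F (h + t) - F t]opprB -eqD mulrN opprK mulrA mulfK.
have [dL ->] := quot_cvg_derive quot.
by rewrite mulfVK.
Unshelve. all: by end_near.
Qed.

Lemma MVT_bound f x y K : x <= y ->
  (forall z, x <= z <= y -> derivable f z 1 /\ `|'D_1 f z| <= K) ->
  `|f y - f x| <= K * (y - x).
Proof.
move=> xy df.
have [z zxy ->] : exists2 z, z \in `[x, y]%R & f y - f x = 'D_1 f z * (y - x).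
  apply: MVT_segment => //.
    move=> z; rewrite in_itv /= => /andP[xz zy]; apply: derivableP.
    by apply: (df z _).1; rewrite !ltW.
  apply: derivable_within_continuous => z; rewrite in_itv /= => xzy.
  exact: (df z xzy).1.
rewrite normrM (ger0_norm (_ : 0 <= y - x)) ?subr_ge0 //.
by apply: ler_wpM2r; rewrite ?subr_ge0 // (df z _).2; move: zxy; rewrite in_itv.
Qed.

Lemma taylor1_bound f t h K : 0 <= h ->
  (forall z, t <= z <= t + h -> [/\ derivable f z 1, derivable ('D_1 f) z 1
     & `|'D_1 ('D_1 f) z| <= K]) ->
  `|f (t + h) - f t - 'D_1 f t * h| <= K * h ^+ 2.
Proof.
move=> h_ge0 df.
have th : t <= t + h by rewrite lerDl.
have [z zI E] : exists2 z, z \in `[t, t + h]%R &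
    f (t + h) - f t = 'D_1 f z * (t + h - t).
  apply: MVT_segment => //.
    move=> z; rewrite in_itv /= => /andP[tz zth]; apply: derivableP.
    by have [] := df z (ltac:(by rewrite !ltW)).
  apply: derivable_within_continuous => z; rewrite in_itv /= => tzh.
  by have [] := df z tzh.
move: zI; rewrite in_itv /= => /andP[tz zth].
have K_ge0 : 0 <= K.
  have [_ _ dK] := df t (ltac:(by rewrite lexx th)).
  exact: le_trans (normr_ge0 _) dK.
have df'_lip : `|'D_1 f z - 'D_1 f t| <= K * (z - t).
  apply: (@MVT_bound ('D_1 f) t z K tz) => y /andP[ty yz].
  by have [] := df y (ltac:(by rewrite ty (le_trans yz zth))).
rewrite E addrAC subrr add0r -mulrBl normrM (ger0_norm h_ge0).
apply: le_trans (ler_wpM2r h_ge0 df'_lip) _.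
rewrite expr2 mulrA; apply: ler_wpM2r => //; apply: ler_wpM2l => //; lra.
Qed.

Lemma charS_slope_cvg (u : R -> R) (a0 a x : R) : u @ 0^' --> a ->
  (fun h => charS_slope (u h) a0 x) @ 0^' --> charS_slope a a0 x.
Proof.
move=> ua; under eq_fun => h do rewrite charS_slopeE; rewrite charS_slopeE.
by apply: cvgD; [apply: cvgD; [exact: cvg_cst | apply: cvgM] | apply: cvgM;
  [| apply: cvgM]] => //; exact: cvg_cst.
Qed.

Lemma derive_charS (A B : R -> R) t x : derivable A t 1 -> derivable B t 1 ->
  derivable (fun s => charS (A s) (B s) x) t 1 /\
  'D_1 (fun s => charS (A s) (B s) x) t =
    'D_1 A t * charS_slope (A t) (A t) x + B t * 'D_1 B t * (54 - 18 * x).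
Proof.
move=> dA dB; apply: quot_cvg_derive.
under eq_fun => h do rewrite charS_sub mulrDr !mulrA.
have -> : B t * 'D_1 B t * (54 - 18 * x) = 'D_1 B t * (B t + B t) * (27 - 9 * x) by ring.
apply: cvgD; apply: cvgM; try apply: cvgM.
- exact: derive_quot_cvg.
- exact/charS_slope_cvg/derivable_shift_cvg.
- exact: derive_quot_cvg.
- by apply: cvgD; [exact: derivable_shift_cvg | exact: cvg_cst].
- exact: cvg_cst.
Qed.

(* Evaluating the factorisation of [P (h + t)] at the root [L t] of [P t] yields
   (L (h + t) - L t) * (L t - M (h + t)) * (L t - N (h + t)) = P t (L t) - P (h + t) (L t). *)
Lemma cubic_root_continuous (P : R -> R -> R) (L M N : R -> R) t d :
  0 < d -> derivable (P^~ (L t)) t 1 ->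
  (forall x, P t x = (x - L t) * (x - M t) * (x - N t)) ->
  (\forall h \near 0^',
     (forall x, P (h + t) x = (x - L (h + t)) * (x - M (h + t)) * (x - N (h + t))) /\
     d <= `|(L t - M (h + t)) * (L t - N (h + t))|) ->
  {for t, continuous L}.
Proof.
move=> d_gt0 dP Pt near_fac.
apply: (implicit_continuous (D := fun h => (L t - M (h + t)) * (L t - N (h + t))) d_gt0 dP).
by apply: filterS near_fac => h [Ph gap]; split=> //=; rewrite Pt Ph; ring.
Qed.

Lemma cubic_root_derivable (P : R -> R -> R) (L M N : R -> R) t d :
  0 < d -> derivable (P^~ (L t)) t 1 ->
  (forall x, P t x = (x - L t) * (x - M t) * (x - N t)) ->
  (\forall h \near 0^',
     (forall x, P (h + t) x = (x - L (h + t)) * (x - M (h + t)) * (x - N (h + t))) /\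
     d <= `|(L t - M (h + t)) * (L t - N (h + t))|) ->
  {for t, continuous M} -> {for t, continuous N} ->
  derivable L t 1 /\ 'D_1 L t * ((L t - M t) * (L t - N t)) = - 'D_1 (P^~ (L t)) t.
Proof.
move=> d_gt0 dP Pt near_fac /continuous_withinNshiftx cM /continuous_withinNshiftx cN.
apply: (implicit_derivable (D := fun h => (L t - M (h + t)) * (L t - N (h + t))) d_gt0 dP).
  by apply: cvgM; apply: cvgB => //; exact: cvg_cst.
by apply: filterS near_fac => h [Ph gap]; split=> //=; rewrite Pt Ph; ring.
Qed.

End Calculus.

Definition BdB_const (R : realType) (M1 M2 : R) : R := 1 + 3 * ((1 + M1) ^+ 3 + 1 + M2 ^+ 2).

Section DiscriminantBound.
Variable R : realType.

Lemma BdB_const_ge1 (M1 M2 : R) : 0 <= M1 -> 1 <= BdB_const M1 M2.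
Proof.
move=> M1_ge0; rewrite /BdB_const lerDl.
have := sqr_ge0 M2; have := exprn_ge0 3 (_ : 0 <= 1 + M1); nra.
Qed.

Lemma sqr_add3_le (x y z : R) : (x + y + z) ^+ 2 <= 3 * (x ^+ 2 + y ^+ 2 + z ^+ 2).
Proof. have := sqr_ge0 (x - y); have := sqr_ge0 (y - z); have := sqr_ge0 (x - z); nra. Qed.

Lemma discriminant_BdB_bound (A B : R -> R) t M1 M2 :
  0 < A t -> A t <= 1 ->
  (forall s, t <= s <= t + A t -> derivable A s 1 /\ `|'D_1 A s| <= M1) ->
  (forall s, t <= s <= t + A t ->
     [/\ derivable B s 1, derivable ('D_1 B) s 1 & `|'D_1 ('D_1 B) s| <= M2]) ->
  0 <= 4 * A t ^+ 3 - 27 * B t ^+ 2 ->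
  0 <= 4 * A (t + A t) ^+ 3 - 27 * B (t + A t) ^+ 2 ->
  `|B t * 'D_1 B t| <= BdB_const M1 M2 * A t ^+ 2.
Proof.
set h := A t => h_gt0 h_le1 dA dB disc_t disc_th.
set K := BdB_const M1 M2.
have th : t <= t + h by rewrite lerDl ltW.
have M1_ge0 : 0 <= M1 by have [_] := dA t (ltac:(by rewrite lexx th)); apply: le_trans.
have h3_ge0 : 0 <= h ^+ 3 by rewrite exprn_ge0 // ltW.
have A_th : `|A (t + h) - h| <= M1 * h.
  by have := MVT_bound th dA; rewrite addrAC subrr add0r.
have A_th_ge0 : 0 <= A (t + h).
  by rewrite -(real_exprn_odd_ge0 (n := 3)) ?num_real //; nra.
have A_th_le : A (t + h) ^+ 3 <= ((1 + M1) * h) ^+ 3.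
  have M1h_ge0 : 0 <= (1 + M1) * h by apply: mulr_ge0; lra.
  by rewrite lerXn2r ?nnegrE //; move: A_th; rewrite ler_norml; lra.
have B_th : B (t + h) ^+ 2 <= (1 + M1) ^+ 3 * h ^+ 3 by rewrite -exprMn; nra.
have B_t : B t ^+ 2 <= h ^+ 3 by have := sqr_ge0 (B t); lra.
set Rm := B (t + h) - B t - 'D_1 B t * h.
have Rm_sq : Rm ^+ 2 <= M2 ^+ 2 * h ^+ 3.
  have /ler_normlP[Rm_lo Rm_hi] : `|Rm| <= M2 * h ^+ 2 := taylor1_bound (ltW h_gt0) dB.
  have M2h : 0 <= M2 * h ^+ 2 by lra.
  have : Rm ^+ 2 <= (M2 * h ^+ 2) ^+ 2 by rewrite !expr2; nra.
  have -> : (M2 * h ^+ 2) ^+ 2 = M2 ^+ 2 * h ^+ 3 * h by ring.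
  have := mulr_ge0 (sqr_ge0 M2) h3_ge0; nra.
have dB_sq : 'D_1 B t ^+ 2 <= (K - 1) * h.
  rewrite -(ler_pM2r (exprn_gt0 2 h_gt0)) -exprMn.
  have -> : 'D_1 B t * h = B (t + h) + - B t + - Rm by rewrite /Rm; ring.
  apply: le_trans (sqr_add3_le _ _ _) _; rewrite !sqrrN /K /BdB_const; nra.
have K_ge1 : 1 <= K := BdB_const_ge1 M2 M1_ge0.
have Kh_ge0 : 0 <= K * h ^+ 2 by apply: mulr_ge0; [lra | exact: sqr_ge0].
have : (B t * 'D_1 B t) ^+ 2 <= (K * h ^+ 2) ^+ 2.
  rewrite exprMn; apply: le_trans (ler_pM (sqr_ge0 _) (sqr_ge0 _) B_t dB_sq) _.
  have -> : (K * h ^+ 2) ^+ 2 = K ^+ 2 * (h ^+ 3 * h) by ring.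
  have := mulr_ge0 h3_ge0 (ltW h_gt0); nra.
by rewrite !expr2 => ?; apply/ler_normlP; split; nra.
Qed.

End DiscriminantBound.

Lemma ler_norm_of_mul_eq (R : realFieldType) (u v w d Q : R) :
  0 < d -> d <= `|v| -> u * v = w -> `|w| <= Q * d -> `|u| <= Q.
Proof.
move=> d_gt0 dv <- uvQ; rewrite -(ler_pM2r d_gt0); apply: le_trans uvQ.
by rewrite normrM ler_wpM2l.
Qed.

Definition eigen_deriv_const (R : realType) (M1 M2 : R) : R := 1000 * (M1 + BdB_const M1 M2).

Lemma eigen_deriv_const_spec (R : realFieldType) (a M1 K : R) :
  0 < a -> a <= 1/100 -> 0 <= M1 -> 1 <= K ->
  [/\ M1 * (41 * a ^+ 2) + K * a ^+ 2 * 54 <= 1000 * (M1 + K) * a * (a / 8),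
      M1 * (22 * a) + K * a ^+ 2 * 54 <= 1000 * (M1 + K) * (a / 8)
    & M1 * 77 + K * a ^+ 2 * 18 <= 1000 * (M1 + K) * 1].
Proof.
move=> a_gt0 a_small M1_ge0 K_ge1.
have a_sq : a ^+ 2 <= a / 100 by rewrite expr2; nra.
have M1a : 0 <= M1 * a ^+ 2 by apply: mulr_ge0 => //; exact: sqr_ge0.
have Ka : K * a ^+ 2 <= K * a by apply: ler_wpM2l; lra.
have Ka1 : K * a ^+ 2 <= K by rewrite -[leRHS]mulr1; apply: ler_wpM2l; lra.
have Ka_ge0 : 0 <= K * a ^+ 2 by apply: mulr_ge0; [lra | exact: sqr_ge0].
have M1a1 : 0 <= M1 * a by apply: mulr_ge0; lra.
split; last by lra.
- have -> : 1000 * (M1 + K) * a * (a / 8) = 125 * (M1 * a ^+ 2) + 125 * (K * a ^+ 2).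
    by rewrite expr2; field.
  lra.
- have -> : 1000 * (M1 + K) * (a / 8) = 125 * (M1 * a) + 125 * (K * a) by field.
  lra.
Qed.

Section EigenvalueDerivatives.
Variables (R : realType) (A B L1 L2 L3 : R -> R) (T r eps M1 M2 : R).
Hypothesis eps_small : eps <= 1/100.
Hypothesis r_eps_T : r + eps <= T.
Hypothesis dA : forall s : R, 0 <= s -> s < T -> derivable A s 1 /\ `|'D_1 A s| <= M1.
Hypothesis dB : forall s : R, 0 <= s -> s < T ->
  [/\ derivable B s 1, derivable ('D_1 B) s 1 & `|'D_1 ('D_1 B) s| <= M2].
Hypothesis disc_ge0 : forall s : R, 0 <= s -> s < T -> 0 <= 4 * A s ^+ 3 - 27 * B s ^+ 2.
Hypothesis A_small : forall s : R, 0 < s -> s < r -> 0 < A s /\ A s <= eps.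
Hypothesis roots : forall s : R, 0 < s -> s < r -> L1 s <= L2 s <= L3 s /\
  forall x, charS (A s) (B s) x = (x - L1 s) * (x - L2 s) * (x - L3 s).

Lemma eigen_windows (t : R) : 0 < t -> t < r -> charS_windows (A t) (L1 t) (L2 t) (L3 t).
Proof.
move=> t_gt0 t_lt; have [a_gt0 a_le] := A_small t_gt0 t_lt; have [l123 fac] := roots t_gt0 t_lt.
apply: charS_root_bounds => //; first exact: le_trans a_le eps_small.
have rT := r_eps_T; apply: disc_ge0; lra.
Qed.

Lemma eigen_BdB_bound (t : R) : 0 < t -> t < r ->
  `|B t * 'D_1 B t| <= BdB_const M1 M2 * A t ^+ 2.
Proof.
move=> t_gt0 t_lt; have [a_gt0 a_le] := A_small t_gt0 t_lt; have rT := r_eps_T.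
have in_T (s : R) : t <= s <= t + A t -> 0 <= s /\ s < T.
  by move=> /andP[ts st]; split; lra.
apply: discriminant_BdB_bound => //.
- by have := eps_small; lra.
- by move=> s /in_T[]; exact: dA.
- by move=> s /in_T[]; exact: dB.
- by apply: disc_ge0; lra.
- by apply: disc_ge0; lra.
Qed.

Lemma near_A_window (t : R) : 0 < t -> t < r -> \forall h \near 0^',
  [/\ 0 < h + t, h + t < r, A t / 2 <= A (h + t) & A (h + t) <= 2 * A t].
Proof.
move=> t_gt0 t_lt; have [a_gt0 a_le] := A_small t_gt0 t_lt; have rT := r_eps_T.
have /cvgrPdist_lt cA := derivable_shift_cvg (dA (ltW t_gt0) (ltac:(lra))).1.
have /dnbhs0_lt h_lt_t : 0 < t by [].
have /dnbhs0_lt h_lt_rt : 0 < r - t by rewrite subr_gt0.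
near=> h.
have : `|h| < t by near: h; exact: h_lt_t.
have : `|h| < r - t by near: h; exact: h_lt_rt.
have : `|A t - A (h + t)| < A t / 2 by near: h; apply: cA; lra.
rewrite !ltr_norml => /andP[A_lo A_hi] /andP[_ h_hi'] /andP[h_lo h_hi].
by split; lra.
Unshelve. all: by end_near.
Qed.

Lemma near_eigen_gaps (t : R) : 0 < t -> t < r -> \forall h \near 0^',
  (forall x, charS (A (h + t)) (B (h + t)) x =
     (x - L1 (h + t)) * (x - L2 (h + t)) * (x - L3 (h + t))) /\
  [/\ A t / 8 <= `|(L1 t - L2 (h + t)) * (L1 t - L3 (h + t))|,
      A t / 8 <= `|(L2 t - L1 (h + t)) * (L2 t - L3 (h + t))|
    & 1 <= `|(L3 t - L1 (h + t)) * (L3 t - L2 (h + t))|].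
Proof.
move=> t_gt0 t_lt; have [a_gt0 a_le] := A_small t_gt0 t_lt.
apply: filterS (near_A_window t_gt0 t_lt) => h [ht_gt0 ht_lt A_lo A_hi].
split; first exact: (roots ht_gt0 ht_lt).2.
apply: charS_windows_gaps (eigen_windows t_gt0 t_lt) (eigen_windows ht_gt0 ht_lt) => //.
- exact: le_trans a_le eps_small.
- by apply/andP.
Qed.

Lemma eigen_derivable (t : R) : 0 < t -> t < r ->
  [/\ derivable L1 t 1, derivable L2 t 1 & derivable L3 t 1] /\
  [/\ 'D_1 L1 t * ((L1 t - L2 t) * (L1 t - L3 t)) =
        - 'D_1 (fun s => charS (A s) (B s) (L1 t)) t,
      'D_1 L2 t * ((L2 t - L1 t) * (L2 t - L3 t)) =
        - 'D_1 (fun s => charS (A s) (B s) (L2 t)) t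
    & 'D_1 L3 t * ((L3 t - L1 t) * (L3 t - L2 t)) =
        - 'D_1 (fun s => charS (A s) (B s) (L3 t)) t].
Proof.
move=> t_gt0 t_lt; have [a_gt0 a_le] := A_small t_gt0 t_lt.
have rT := r_eps_T; have e1 := eps_small; have tT : t < T by lra.
pose P s x := charS (A s) (B s) x.
have dP x : derivable (P^~ x) t 1.
  have [dAt _] := dA (ltW t_gt0) tT; have [dBt _ _] := dB (ltW t_gt0) tT.
  by have [] := derive_charS x dAt dBt.
have d_gt0 : 0 < A t / 8 by lra.
have F1 : forall x, P t x = (x - L1 t) * (x - L2 t) * (x - L3 t) := (roots t_gt0 t_lt).2.
have F2 x : P t x = (x - L2 t) * (x - L1 t) * (x - L3 t) by rewrite F1; ring.
have F3 x : P t x = (x - L3 t) * (x - L1 t) * (x - L2 t) by rewrite F1; ring.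
have N := near_eigen_gaps t_gt0 t_lt.
have N1 : \forall h \near 0^',
    (forall x, P (h + t) x = (x - L1 (h + t)) * (x - L2 (h + t)) * (x - L3 (h + t))) /\
    A t / 8 <= `|(L1 t - L2 (h + t)) * (L1 t - L3 (h + t))|.
  by apply: filterS N => h [fac [g1 _ _]].
have N2 : \forall h \near 0^',
    (forall x, P (h + t) x = (x - L2 (h + t)) * (x - L1 (h + t)) * (x - L3 (h + t))) /\
    A t / 8 <= `|(L2 t - L1 (h + t)) * (L2 t - L3 (h + t))|.
  by apply: filterS N => h [fac [_ g2 _]]; split=> // x; rewrite /P fac; ring.
have N3 : \forall h \near 0^',
    (forall x, P (h + t) x = (x - L3 (h + t)) * (x - L1 (h + t)) * (x - L2 (h + t))) /\
    A t / 8 <= `|(L3 t - L1 (h + t)) * (L3 t - L2 (h + t))|.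
  apply: filterS N => h [fac [_ _ g3]]; split; last by lra.
  by move=> x; rewrite /P fac; ring.
have c1 := cubic_root_continuous d_gt0 (dP _) F1 N1.
have c2 := cubic_root_continuous d_gt0 (dP _) F2 N2.
have c3 := cubic_root_continuous d_gt0 (dP _) F3 N3.
have [dL1 eq1] := cubic_root_derivable d_gt0 (dP _) F1 N1 c2 c3.
have [dL2 eq2] := cubic_root_derivable d_gt0 (dP _) F2 N2 c1 c3.
have [dL3 eq3] := cubic_root_derivable d_gt0 (dP _) F3 N3 c1 c2.
by split; split.
Qed.

Lemma eigen_charS_dt_bound (t x S Cc : R) : 0 < t -> t < r ->
  `|charS_slope (A t) (A t) x| <= S -> `|54 - 18 * x| <= Cc ->
  `|'D_1 (fun s => charS (A s) (B s) x) t| <= M1 * S + BdB_const M1 M2 * A t ^+ 2 * Cc.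
Proof.
move=> t_gt0 t_lt slopeS xCc; have [a_gt0 a_le] := A_small t_gt0 t_lt.
have rT := r_eps_T; have tT : t < T by lra.
have [dAt dA_le] := dA (ltW t_gt0) tT; have [dBt _ _] := dB (ltW t_gt0) tT.
rewrite (derive_charS x dAt dBt).2; apply: le_trans (ler_normD _ _) _.
rewrite !normrM; apply: lerD; first exact: ler_pM.
by apply: ler_pM => //; rewrite -normrM; exact: eigen_BdB_bound.
Qed.

Lemma eigen_derive_bounds (t : R) : 0 < t -> t < r ->
  [/\ derivable L1 t 1, derivable L2 t 1 & derivable L3 t 1] /\
  [/\ `|'D_1 L1 t| <= eigen_deriv_const M1 M2 * A t,
      `|'D_1 L2 t| <= eigen_deriv_const M1 M2 & `|'D_1 L3 t| <= eigen_deriv_const M1 M2].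
Proof.
move=> t_gt0 t_lt; have [a_gt0 a_le] := A_small t_gt0 t_lt.
have rT := r_eps_T; have tT : t < T by lra.
have a8 : 0 < A t / 8 by lra.
have a_mid : A t / 2 <= A t <= 2 * A t by apply/andP; split; lra.
have a_small : A t <= 1/100 := le_trans a_le eps_small.
have M1_ge0 : 0 <= M1 by have [_] := dA (ltW t_gt0) tT; exact: le_trans.
have [C1 C2 C3] := eigen_deriv_const_spec a_gt0 a_small M1_ge0 (BdB_const_ge1 M2 M1_ge0).
have [dL [eq1 eq2 eq3]] := eigen_derivable t_gt0 t_lt.
have W := eigen_windows t_gt0 t_lt.
have [s1 s2 s3] := charS_windows_slope a_gt0 a_small W.
have [c1 c2 c3] := charS_windows_affine a_gt0 a_small W.
have [g1 g2 g3] : [/\ A t / 8 <= `|(L1 t - L2 t) * (L1 t - L3 t)|,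
    A t / 8 <= `|(L2 t - L1 t) * (L2 t - L3 t)| & 1 <= `|(L3 t - L1 t) * (L3 t - L2 t)|].
  exact: (charS_windows_gaps _ _ a_mid W W).
split=> //; split; rewrite /eigen_deriv_const.
- apply: (ler_norm_of_mul_eq a8 g1 eq1); rewrite normrN.
  exact: le_trans (eigen_charS_dt_bound t_gt0 t_lt s1 c1) C1.
- apply: (ler_norm_of_mul_eq a8 g2 eq2); rewrite normrN.
  exact: le_trans (eigen_charS_dt_bound t_gt0 t_lt s2 c2) C2.
- apply: (ler_norm_of_mul_eq ltr01 g3 eq3); rewrite normrN.
  exact: le_trans (eigen_charS_dt_bound t_gt0 t_lt s3 c3) C3.
Qed.

End EigenvalueDerivatives.

Section CoordinateDirections.
Variables (R : realType) (l : nat).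
Implicit Types (f : 'rV[R]_l -> R) (X Y Z v : 'rV[R]_l).

Lemma derive_along_line f Y v (u : R) : derivable f (Y + u *: v) v ->
  derivable (fun s : R => f (Y + s *: v)) u 1 /\
  'D_1 (fun s : R => f (Y + s *: v)) u = 'D_v f (Y + u *: v).
Proof.
have quotE : (fun h : R => h^-1 *: (((fun s : R => f (Y + s *: v)) \o shift u) (h *: 1)
            - (fun s : R => f (Y + s *: v)) u)) =
         (fun h : R => h^-1 *: ((f \o shift (Y + u *: v)) (h *: v) - f (Y + u *: v))).
  apply/funext => h /=; congr (_ *: (f _ - _)).
  by rewrite [h *: 1]mulr1 scalerDl addrCA.
by move=> df; split; [rewrite /derivable quotE | rewrite /derive quotE].
Qed.

Lemma MVT_bound_line f Y v (d M : R) :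
  (forall u : R, `|u| <= `|d| -> derivable f (Y + u *: v) v /\ `|'D_v f (Y + u *: v)| <= M) ->
  `|f (Y + d *: v) - f Y| <= M * `|d|.
Proof.
move=> df; pose g s := f (Y + s *: v).
have dg z : `|z| <= `|d| -> derivable g z 1 /\ `|'D_1 g z| <= M.
  by move=> zd; have [/derive_along_line[? ->] ?] := df z zd.
have g0 : g 0 = f Y by rewrite /g scale0r addr0.
have [d_ge0|d_lt0] := lerP 0 d.
  rewrite -g0 (ger0_norm d_ge0) -[X in M * X]subr0; apply: MVT_bound => // z /andP[z_ge0 zd].
  by apply: dg; rewrite !ger0_norm.
rewrite -g0 distrC (ltr0_norm d_lt0) -[X in M * X]add0r; apply: MVT_bound; first exact: ltW.
by move=> z /andP[dz z_le0]; apply: dg; rewrite (ler0_norm z_le0) (ltr0_norm d_lt0) lerN2.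
Qed.

Lemma MVT_bound_box f X0 X (r M : R) : 0 <= M -> 0 <= r ->
  (forall i, `|X 0 i - X0 0 i| <= r) ->
  (forall j Z, (forall i, `|Z 0 i - X0 0 i| <= r) ->
     derivable f Z (delta_mx 0 j) /\ `|'D_(delta_mx 0 j) f Z| <= M) ->
  `|f X - f X0| <= l%:R * (M * r).
Proof.
move=> M_ge0 r_ge0 X_box df.
pose Y k : 'rV[R]_l := \row_j (if (j < k)%N then X 0 j else X0 0 j).
have Y_box k i : `|Y k 0 i - X0 0 i| <= r by rewrite mxE; case: ifP; rewrite ?subrr ?normr0.
suff Yk k : `|f (Y k) - f X0| <= k%:R * (M * r).
  by have := Yk l; congr (`|f _ - _| <= _); apply/rowP => j; rewrite mxE ltn_ord.
elim: k => [|k IHk].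
  by rewrite mul0r (_ : Y 0 = X0) ?subrr ?normr0 //; apply/rowP => j; rewrite mxE.
have Mr_ge0 : 0 <= M * r by exact: mulr_ge0.
have [k_lt|k_ge] := ltnP k l; last first.
  have -> : Y k.+1 = Y k.
    by apply/rowP => j; rewrite !mxE ltnS (leq_trans (ltn_ord j) k_ge) (ltnW (leq_trans (ltn_ord j) k_ge)).
  by apply: le_trans IHk _; rewrite ler_wpM2r // ler_nat.
pose jk := Ordinal k_lt; set d := X 0 jk - X0 0 jk.
have Y_step : Y k.+1 = Y k + d *: delta_mx 0 jk.
  apply/rowP => j; rewrite !mxE /= ltnS leq_eqVlt.
  case: (eqVneq j jk) => [->|j_neq]; first by rewrite eqxx ltnn mulr1 /d addrC subrK.
  by rewrite (_ : (j == k :> nat) = false) ?mulr0 ?addr0 //; apply: contraNF j_neq => /eqP j_k; apply/eqP/val_inj.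
have step : `|f (Y k.+1) - f (Y k)| <= M * `|d|.
  rewrite Y_step; apply: MVT_bound_line => u u_d; apply: df => i; rewrite !mxE /=.
  case: (eqVneq i jk) => [->|i_neq]; last by rewrite mulr0 addr0; have := Y_box k i; rewrite mxE.
  by rewrite ltnn mulr1 addrAC subrr add0r (le_trans u_d) ?X_box.
rewrite -(subrK (f (Y k)) (f (Y k.+1))) -addrA -nat1r mulrDl mul1r.
apply: le_trans (ler_normD _ _) (lerD (le_trans step _) IHk).
by rewrite ler_wpM2l ?X_box.
Qed.

Lemma ball_rV_coord (X0 X : 'rV[R]_l) (r : R) : ball X0 r X -> forall i, `|X 0 i - X0 0 i| < r.
Proof. by move=> [_ X0X] i; rewrite distrC; exact: X0X. Qed.

Lemma coord_ball_rV (X0 X : 'rV[R]_l) (r : R) :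
  0 < r -> (forall i, `|X 0 i - X0 0 i| < r) -> ball X0 r X.
Proof. by move=> r_gt0 X0X; split=> // i j; rewrite (ord1 i) /ball /= distrC. Qed.

End CoordinateDirections.

Section SmoothBounds.
Variables (R : realType) (l : nat) (c T : R) (W : set 'rV[R]_l) (F : R -> 'rV[R]_l -> R).
Hypothesis F_smooth : smooth_bdd_derivs c T W F.

Lemma smooth_dt_bound : exists M : R, 0 <= M /\ forall t X, - c < t < T -> W X ->
  derivable (F^~ X) t 1 /\ `|'D_1 (F^~ X) t| <= M.
Proof.
have [M M_bd] := F_smooth.2 [:: None] isT.
exists `|M|; split=> // t X tI WX; split; first exact: (F_smooth.1 [::] None).
exact: le_trans (M_bd t X tI WX) (ler_norm M).
Qed.

Lemma smooth_dtt_bound : exists M : R, forall t X, - c < t < T -> W X ->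
  [/\ derivable (F^~ X) t 1, derivable ('D_1 (F^~ X)) t 1 & `|'D_1 ('D_1 (F^~ X)) t| <= M].
Proof.
have [M M_bd] := F_smooth.2 [:: None; None] isT.
exists M => t X tI WX; split; [exact: (F_smooth.1 [::] None) | | exact: M_bd].
exact: (F_smooth.1 [:: None] None).
Qed.

Lemma smooth_dX_bound : exists M : R, 0 <= M /\ forall j t X, - c < t < T -> W X ->
  derivable (F t) X (delta_mx 0 j) /\ `|'D_(delta_mx 0 j) (F t) X| <= M.
Proof.
have /choice[Mj Mj_bd] : forall j : 'I_l, exists M : R, forall t X, - c < t < T -> W X ->
    `|'D_(delta_mx 0 j) (F t) X| <= M.
  by move=> j; have [M M_bd] := F_smooth.2 [:: Some j] isT; exists M.
exists (\sum_(j < l) `|Mj j|); split; first by apply: sumr_ge0.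
move=> j t X tI WX; split; first exact: (F_smooth.1 [::] (Some j)).
apply: le_trans (Mj_bd j t X tI WX) (le_trans (ler_norm _) _).
by rewrite (bigD1 j) //= lerDl sumr_ge0.
Qed.

End SmoothBounds.

Lemma smooth_lipschitz (R : realType) (l : nat) (c T : R) (W : set 'rV[R]_l)
    (F : R -> 'rV[R]_l -> R) (Xbar X : 'rV[R]_l) (r M1 MX s : R) :
  0 < c -> 0 <= s -> s < T -> 0 <= r -> 0 <= MX ->
  (forall Z : 'rV[R]_l, (forall i, `|Z 0 i - Xbar 0 i| <= r) -> W Z) ->
  (forall t Z, - c < t < T -> W Z -> derivable (F^~ Z) t 1 /\ `|'D_1 (F^~ Z) t| <= M1) ->
  (forall j t Z, - c < t < T -> W Z ->
     derivable (F t) Z (delta_mx 0 j) /\ `|'D_(delta_mx 0 j) (F t) Z| <= MX) ->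
  (forall i, `|X 0 i - Xbar 0 i| <= r) ->
  `|F s X - F 0 Xbar| <= M1 * s + l%:R * (MX * r).
Proof.
move=> c_gt0 s_ge0 s_lt r_ge0 MX_ge0 boxW dt dX X_box.
have zero_in : - c < 0 < T by apply/andP; split; lra.
rewrite -(subrK (F 0 X) (F s X)) -addrA; apply: le_trans (ler_normD _ _) (lerD _ _).
  rewrite -[X in M1 * X]subr0; apply: (@MVT_bound _ (F^~ X) 0 s M1 s_ge0) => z /andP[z_ge0 z_le].
  by apply: dt (boxW _ X_box); apply/andP; split; lra.
apply: MVT_bound_box => // j Z Z_box.
exact: dX zero_in (boxW _ Z_box).
Qed.

Lemma smooth_small_near_origin (R : realType) (l : nat) (W : set 'rV[R]_l)
    (Xbar : 'rV[R]_l) (c T eps : R) (a : R -> 'rV[R]_l -> R) :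
  open W -> W Xbar -> 0 < c -> 0 < T -> 0 < eps -> smooth_bdd_derivs c T W a ->
  a 0 Xbar = 0 ->
  exists r : R, [/\ 0 < r, r <= T / 2 &
    forall s X, 0 <= s -> s < r -> ball Xbar r X -> W X /\ a s X <= eps].
Proof.
move=> W_open W_Xbar c_gt0 T_gt0 eps_gt0 a_smooth a0.
have [r0 r0_gt0 r0_W] : exists2 e : R, 0 < e & ball Xbar e `<=` W.
  by apply/nbhs_ballP/open_nbhs_nbhs.
have [M1 [M1_ge0 da]] := smooth_dt_bound a_smooth.
have [MX [MX_ge0 dXa]] := smooth_dX_bound a_smooth.
pose K := l%:R * MX + M1 + 1.
have K_gt0 : 0 < K by have := mulr_ge0 (ler0n R l) MX_ge0; rewrite /K; lra.
pose r := Num.min (r0 / 2) (Num.min (T / 2) (eps / K)).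
have r_gt0 : 0 < r by rewrite !lt_min; apply/and3P; split; [lra | lra | exact: divr_gt0].
have [r_r0 r_T r_eps] : [/\ r <= r0 / 2, r <= T / 2 & r <= eps / K].
  by rewrite !ge_min !lexx !orbT.
have box_W (Z : 'rV[R]_l) : (forall i, `|Z 0 i - Xbar 0 i| <= r) -> W Z.
  move=> Z_box; apply/r0_W/coord_ball_rV => // i.
  by apply: le_lt_trans (Z_box i) _; lra.
exists r; split=> // s X s_ge0 s_lt /ball_rV_coord X_box.
have X_box' i : `|X 0 i - Xbar 0 i| <= r := ltW (X_box i).
split; first exact: box_W.
have s_T : s < T by lra.
have := smooth_lipschitz c_gt0 s_ge0 s_T (ltW r_gt0) MX_ge0 box_W da dXa X_box'.
rewrite a0 subr0 => /ler_normlW a_le.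
have : M1 * s <= M1 * r by rewrite ler_wpM2l // ltW.
have : K * r <= eps by rewrite -ler_pdivlMl // mulrC.
have -> : K * r = l%:R * (MX * r) + M1 * r + r by rewrite /K; ring.
lra.
Qed.

Theorem lemma2p3 (R : realType) (l : nat) (W : set 'rV[R]_l) (Xbar : 'rV[R]_l)
  (c T : R) (a b : R -> 'rV[R]_l -> R)
  (l1 l2 l3 : R -> 'rV[R]_l -> R) :
  open W -> W Xbar -> 0 < c -> 0 < T ->
  smooth_bdd_derivs c T W a -> smooth_bdd_derivs c T W b ->
  (forall t X, 0 <= t < T -> W X -> 0 <= 4 * a t X ^+ 3 - 27 * b t X ^+ 2) ->
  a 0 Xbar = 0 ->
  (forall t X, 0 < t < T -> W X -> 0 < a t X) ->
  (forall t X, 0 < t < T -> W X ->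
     sorted_eigenvalues (Smat (a t X) (b t X)) (l1 t X) (l2 t X) (l3 t X)) ->
  exists r : R, 0 < r /\ exists C : R, 0 < C /\
    forall t X, 0 < t < r -> ball Xbar r X ->
      [/\ derivable (fun s => l1 s X) t 1,
          derivable (fun s => l2 s X) t 1
        & derivable (fun s => l3 s X) t 1] /\
      [/\ `|'D_1 (fun s => l1 s X) t| <= C * a t X,
          `|'D_1 (fun s => l2 s X) t| <= C
        & `|'D_1 (fun s => l3 s X) t| <= C].
Proof.
move=> W_open W_Xbar c_gt0 T_gt0 a_smooth b_smooth disc a0 a_pos eig.
pose eps := Num.min (1/100 : R) (T / 2).
have eps_gt0 : 0 < eps by rewrite lt_min; apply/andP; split; lra.
have [eps_100 eps_T] : eps <= 1/100 /\ eps <= T / 2 by rewrite !ge_min !lexx !orbT.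
have [r [r_gt0 r_T near0]] :=
  smooth_small_near_origin W_open W_Xbar c_gt0 T_gt0 eps_gt0 a_smooth a0.
have [M1 [M1_ge0 da]] := smooth_dt_bound a_smooth.
have [M2 db] := smooth_dtt_bound b_smooth.
exists r; split=> //; exists (eigen_deriv_const M1 M2); split.
  by rewrite /eigen_deriv_const; have := BdB_const_ge1 M2 M1_ge0; lra.
move=> t X /andP[t_gt0 t_lt] X_ball.
have W_X := (near0 0 X (lexx _) r_gt0 X_ball).1.
have in_T (s : R) : 0 <= s -> s < T -> - c < s < T.
  by move=> s_ge0 s_lt; apply/andP; split; lra.
apply: (eigen_derive_bounds (A := a^~ X) (B := b^~ X) (T := T) (r := r) (eps := eps)) => //.
- lra.
- by move=> s s_ge0 s_lt; apply: da (in_T _ s_ge0 s_lt) W_X.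
- by move=> s s_ge0 s_lt; apply: db (in_T _ s_ge0 s_lt) W_X.
- by move=> s s_ge0 s_lt; apply: disc W_X; apply/andP.
- move=> s s_gt0 s_lt; split; last exact: (near0 s X (ltW s_gt0) s_lt X_ball).2.
  by apply: a_pos W_X; apply/andP; split; lra.
- move=> s s_gt0 s_lt; apply/sorted_eigenvalues_charS/eig => //.
  by apply/andP; split; lra.
Qed.
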